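(* Let $w=w(x_1,\dots,x_n)$ be a multilinear commutator word. There exists a positive integer $t_n$ depending only on $n$ such that for every group $G$, every normal subgroup $H$ of $G$, and all $g_1,\dots,g_n\in G$ and $h_1,\dots,h_n\in H$, the element $w(g_1h_1,\dots,g_nh_n)$ can be written as $w(g_1h_1,\dots,g_nh_n)=ah$, where $a$ is a product of at most $t_n$ conjugates (in $G$) of elements of $\{g_1^{\pm1},\dots,g_n^{\pm1}\}$ and $h$ is a $w$-value of $H$.
   Context: Multilinear commutator words are defined recursively: $x$ is a multilinear commutator, and if $u,v$ are multilinear commutators in disjoint sets of variables then $[u,v]$ is one. A $w$-value of $H$ is an element $w(k_1,\dots,k_n)$ with $k_i\in H$. *)

From mathcomp Require Import all_boot.
Set Implicit Arguments. Unset Strict Implicit. Unset Printing Implicit Defensive.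

Record group := Group {
  gcarrier :> Type;
  gmul : gcarrier -> gcarrier -> gcarrier;
  ginv : gcarrier -> gcarrier;
  gone : gcarrier;
  gmulA : forall x y z, gmul x (gmul y z) = gmul (gmul x y) z;
  gmul1l : forall x, gmul gone x = x;
  gmulVl : forall x, gmul (ginv x) x = gone
}.

Section GroupDefs.
Variable G : group.

Definition gconj (x y : G) : G := gmul (ginv y) (gmul x y).
Definition gcomm (a b : G) : G := gmul (gmul (ginv a) (ginv b)) (gmul a b).
Definition gprod (s : seq G) : G := foldr (@gmul G) (gone G) s.

Definition normal_subgroup (H : G -> Prop) : Prop :=
  [/\ H (gone G),
      (forall x y, H x -> H y -> H (gmul x y)),
      (forall x, H x -> H (ginv x)) &
      (forall x y, H x -> H (gconj x y))].
End GroupDefs.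

Inductive cword : Type :=
| CVar of nat
| CComm of cword & cword.

Fixpoint cvars (w : cword) : seq nat :=
  match w with
  | CVar i => [:: i]
  | CComm u v => cvars u ++ cvars v
  end.

Fixpoint ceval (G : group) (k : nat -> G) (w : cword) : G :=
  match w with
  | CVar i => k i
  | CComm u v => gcomm (ceval k u) (ceval k v)
  end.

(* w is a multilinear commutator word in the n variables x_0, ..., x_(n-1):
   every variable occurs exactly once (this forces the two sides of each
   bracket to involve disjoint sets of variables). *)
Definition multilinear_in (n : nat) (w : cword) : Prop :=
  perm_eq (cvars w) (iota 0 n).

Definition prod_conj_gens (G : group) (n t : nat) (g : nat -> G) (a : G) : Prop :=
  exists s : seq (nat * bool * G),
    [/\ size s <= t,
        all (fun p => p.1.1 < n) s &
        a = gprod [seq gconj (if p.1.2 then g p.1.1 else ginv (g p.1.1)) p.2 | p <- s]].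

Definition w_value (G : group) (H : G -> Prop) (n : nat) (w : cword) (h : G) : Prop :=
  exists k : nat -> G, (forall i, i < n -> H (k i)) /\ h = ceval k w.

From mathcomp Require Import all_boot.
From mathcomp Require Import zify.
Set Implicit Arguments. Unset Strict Implicit. Unset Printing Implicit Defensive.

(* Induction on the word, based on the identity
     [X u, Y v] = (X^-1)^u (Y^-1)^(vu) X^(vu) Y^(u^-1 v u) [u, v].
   If w = [w1, w2] with w1(g h) = a1 u and w2(g h) = a2 v, where a1, a2 are
   products of conjugates of the g_i^(+-1) and u, v are w1-, w2-values of H,
   then w(g h) = [a1 u, a2 v] is a product of conjugates of a1^(+-1), a2^(+-1)
   followed by the w-value [u, v].  The number of conjugates satisfies
   t(w) = 2 (t(w1) + t(w2)), which is at most 4^n. *)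

Section GroupTheory.
Variable G : group.
Implicit Types x y z : G.

Lemma gmulV x : gmul x (ginv x) = gone G.
Proof.
rewrite -[gmul x _]gmul1l -{1}(gmulVl (ginv x)).
by rewrite -gmulA (gmulA (ginv x)) gmulVl gmul1l gmulVl.
Qed.

Lemma gmul1r x : gmul x (gone G) = x.
Proof. by rewrite -(gmulVl x) gmulA gmulV gmul1l. Qed.

Lemma gmulKV x y : gmul (ginv x) (gmul x y) = y.
Proof. by rewrite gmulA gmulVl gmul1l. Qed.

Lemma gmulVK x y : gmul x (gmul (ginv x) y) = y.
Proof. by rewrite gmulA gmulV gmul1l. Qed.

Lemma ginv_unique x y : gmul x y = gone G -> ginv x = y.
Proof. by move=> xy1; rewrite -(gmulKV x y) xy1 gmul1r. Qed.

Lemma ginvK x : ginv (ginv x) = x.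
Proof. by apply: ginv_unique; rewrite gmulVl. Qed.

Lemma ginvM x y : ginv (gmul x y) = gmul (ginv y) (ginv x).
Proof. by apply: ginv_unique; rewrite -gmulA gmulVK gmulV. Qed.

Lemma ginv1 : ginv (gone G) = gone G.
Proof. by apply: ginv_unique; rewrite gmul1l. Qed.

End GroupTheory.

Ltac gsimpl := rewrite /gcomm /gconj ?ginvM ?ginvK ?ginv1 -?gmulA;
  do ?rewrite (gmulKV, gmulVK, gmulV, gmulVl, gmul1l, gmul1r).

Section Conjugation.
Variable G : group.
Implicit Types x y z : G.

Lemma gconj1 x : gconj x (gone G) = x.
Proof. by gsimpl. Qed.

Lemma gconjV x y : gconj (ginv x) y = ginv (gconj x y).
Proof. by gsimpl. Qed.

Lemma gconjM x y z : gconj x (gmul y z) = gconj (gconj x y) z.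
Proof. by gsimpl. Qed.

Lemma gcommMM x y u v :
  gcomm (gmul x u) (gmul y v) =
  gmul (gmul (gmul (gconj (ginv x) u) (gconj (ginv y) (gmul v u)))
             (gmul (gconj x (gmul v u)) (gconj y (gmul (ginv u) (gmul v u)))))
       (gcomm u v).
Proof. by gsimpl. Qed.

Lemma gprod_cat (s1 s2 : seq G) : gprod (s1 ++ s2) = gmul (gprod s1) (gprod s2).
Proof. by elim: s1 => [|x s IH] /=; rewrite ?gmul1l // IH gmulA. Qed.

Lemma gprod_conj (s : seq G) y :
  gprod [seq gconj x y | x <- s] = gconj (gprod s) y.
Proof.
elim: s => [|x s IH] /=; first by gsimpl.
by rewrite IH; gsimpl.
Qed.

Lemma gprod_inv (s : seq G) : gprod (rev [seq ginv x | x <- s]) = ginv (gprod s).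
Proof.
elim: s => [|x s IH] /=; first by rewrite ginv1.
by rewrite rev_cons -cats1 gprod_cat IH /= gmul1r ginvM.
Qed.

End Conjugation.

Section ProdConjGens.
Variables (G : group) (n : nat) (g : nat -> G).

Lemma prod_conj_gens_gen i : i < n -> prod_conj_gens n 1 g (g i).
Proof. by move=> lt_in; exists [:: (i, true, gone G)]; rewrite /= gconj1 gmul1r lt_in. Qed.

Lemma prod_conj_gens_le s t a :
  s <= t -> prod_conj_gens n s g a -> prod_conj_gens n t g a.
Proof. by move=> le_st [q [le_qs ? ?]]; exists q; split=> //; apply: leq_trans le_st. Qed.

Lemma prod_conj_gensM s t a b :
  prod_conj_gens n s g a -> prod_conj_gens n t g b ->
  prod_conj_gens n (s + t) g (gmul a b).
Proof.
move=> [p [le_ps Hp ->]] [q [le_qt Hq ->]]; exists (p ++ q).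
by rewrite size_cat leq_add // all_cat Hp Hq map_cat gprod_cat.
Qed.

Lemma prod_conj_gensV t a : prod_conj_gens n t g a -> prod_conj_gens n t g (ginv a).
Proof.
move=> [p [le_pt Hp ->]]; exists (rev [seq (x.1.1, ~~ x.1.2, x.2) | x <- p]).
rewrite size_rev size_map all_rev all_map -gprod_inv map_rev -!map_comp.
split=> //; congr (gprod (rev _)); apply: eq_map => -[[i []] y] /=;
  by rewrite gconjV ?ginvK.
Qed.

Lemma prod_conj_gensJ t a c :
  prod_conj_gens n t g a -> prod_conj_gens n t g (gconj a c).
Proof.
move=> [p [le_pt Hp ->]]; exists [seq (x.1, gmul x.2 c) | x <- p].
rewrite size_map all_map -gprod_conj -!map_comp.
by split=> //; congr gprod; apply: eq_map => x /=; rewrite gconjM.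
Qed.

End ProdConjGens.

Lemma ceval_eq_in (G : group) (k k' : nat -> G) w :
  {in cvars w, k =1 k'} -> ceval k w = ceval k' w.
Proof.
elim: w => [i|u IHu v IHv] /= eq_kk'; first by apply: eq_kk'; rewrite inE.
by rewrite IHu ?IHv // => i Hi; apply: eq_kk'; rewrite mem_cat Hi ?orbT.
Qed.

Lemma w_value_comm (G : group) (H : G -> Prop) n u v x y :
  ~~ has (mem (cvars u)) (cvars v) ->
  w_value H n u x -> w_value H n v y -> w_value H n (CComm u v) (gcomm x y).
Proof.
move=> disj_uv [k [Hk ->]] [k' [Hk' ->]].
exists (fun i => if i \in cvars u then k i else k' i); split=> /=.
  by move=> i lt_in; case: ifP => _; [apply: Hk | apply: Hk'].
congr gcomm; apply: ceval_eq_in => i Hi; first by rewrite Hi.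
by case: ifP => // Hiu; case/hasP: disj_uv; exists i.
Qed.

Lemma cvars_gt0 w : 0 < size (cvars w).
Proof. by elim: w => //= u IHu v _; rewrite size_cat addn_gt0 IHu. Qed.

Lemma double_add_exp4_le a b : 0 < a -> 0 < b -> 2 * (4 ^ a + 4 ^ b) <= 4 ^ (a + b).
Proof.
move=> a_gt0 b_gt0; rewrite expnD.
have : 4 <= 4 ^ a by rewrite -{1}(expn1 4) leq_pexp2l.
have : 4 <= 4 ^ b by rewrite -{1}(expn1 4) leq_pexp2l.
move: (4 ^ a) (4 ^ b) => x y; nia.
Qed.

Lemma ceval_mul_conj_gens (G : group) (H : G -> Prop) n (g h : nat -> G) w :
  (forall i, i < n -> H (h i)) -> uniq (cvars w) -> all (gtn n) (cvars w) ->
  exists a hv, [/\ ceval (fun i => gmul (g i) (h i)) w = gmul a hv,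
                   prod_conj_gens n (4 ^ size (cvars w)) g a &
                   w_value H n w hv].
Proof.
move=> Hh; elim: w => [i|u IHu v IHv] /=.
  rewrite andbT => _ lt_in; exists (g i), (h i); split=> //.
    exact: prod_conj_gens_le _ (prod_conj_gens_gen g lt_in).
  by exists h.
rewrite cat_uniq all_cat => /and3P[Uu disj_uv Uv] /andP[Au Av].
have [a [x [-> Ca Vx]]] := IHu Uu Au.
have [b [y [-> Cb Vy]]] := IHv Uv Av.
rewrite gcommMM size_cat; eexists; exists (gcomm x y); split=> //; last exact: w_value_comm.
apply: prod_conj_gens_le (double_add_exp4_le (cvars_gt0 u) (cvars_gt0 v)) _.
rewrite mul2n -addnn.
by do 2!apply: prod_conj_gensM; apply: prod_conj_gensJ; do ?apply: prod_conj_gensV.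
Qed.

Theorem lemma3p5 (n : nat) :
  exists t : nat, 0 < t /\
  forall (w : cword), multilinear_in n w ->
  forall (G : group) (H : G -> Prop), normal_subgroup H ->
  forall (g h : nat -> G), (forall i, i < n -> H (h i)) ->
  exists (a hv : G),
    [/\ ceval (fun i => gmul (g i) (h i)) w = gmul a hv,
        prod_conj_gens n t g a &
        w_value H n w hv].
Proof.
exists (4 ^ n); split; first by rewrite expn_gt0.
move=> w multi_w G H _ g h Hh.
have uniq_w : uniq (cvars w) by rewrite (perm_uniq multi_w) iota_uniq.
have lt_w : all (gtn n) (cvars w).
  by apply/allP => i; rewrite (perm_mem multi_w) mem_iota.
have size_w : size (cvars w) = n by rewrite (perm_size multi_w) size_iota.
rewrite -[in 4 ^ n]size_w.
exact: ceval_mul_conj_gens.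
Qed.
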